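(* For a graph $G$, let $\widehat G$ denote its full suspension (cone), obtained by adding a new vertex adjacent to every vertex of $G$. Then: (a) for $n\ge 3$, $\widehat{C_n}$ is pseudo-Gorenstein$^{*}$ if and only if $n\equiv 0\pmod{12}$; (b) for $n\ge 1$, $\widehat{P_n}$ is pseudo-Gorenstein$^{*}$ if and only if $n\equiv 1,10\pmod{12}$.
   Context: $C_n$ is the cycle and $P_n$ the path on $n$ vertices. For a finite simple graph $G$ on vertex set $[N]$, let $S=K[x_1,\dots,x_N]$ ($K$ a field) and $I(G)$ the edge ideal generated by $x_ix_j$, $\{i,j\}\in E(G)$. Let $\alpha(G)$ be the independence number (equal to $\dim S/I(G)$). Write the Hilbert series of $S/I(G)$ uniquely as $(h_0+\dots+h_st^s)/(1-t)^{\alpha(G)}$ with $h_s\ne 0$, and $\mathfrak a(G)=s-\alpha(G)$. $G$ is pseudo-Gorenstein$^{*}$ if $h_s=1$ and $\mathfrak a(G)=0$. *)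

From HB Require Import structures.
From mathcomp Require Import all_boot all_order all_algebra.
Set Implicit Arguments. Unset Strict Implicit. Unset Printing Implicit Defensive.
Import Order.TTheory GRing.Theory Num.Theory.

(* A finite simple graph is given by a finite vertex type T and a symmetric,
   irreflexive adjacency relation e : rel T.  The polynomial ring is
   S = K[x_v : v in T]. *)

Definition independent (T : finType) (e : rel T) (A : {set T}) : bool :=
  [forall x in A, forall y in A, ~~ e x y].

Definition indep_number (T : finType) (e : rel T) : nat :=
  \max_(A : {set T} | independent e A) #|A|.

(* Since I(G) is a monomial
   ideal, the monomials not in I(G) form a K-basis of S/I(G); a monomial
   prod x_v^(f v) of degree k lies outside I(G) iff no edge {x,y} has
   f x > 0 and f y > 0.  Exponents of a degree-k monomial are <= k, so
   they are encoded as {ffun T -> 'I_k.+1}.  (Independent of the field K.) *)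
Definition hilb_fun (T : finType) (e : rel T) (k : nat) : nat :=
  #|[set f : {ffun T -> 'I_k.+1} |
      (\sum_(x : T) (f x : nat) == k) &&
      [forall x, forall y, e x y ==> ((f x : nat) == 0) || ((f y : nat) == 0)]]|.

(* The Hilbert series sum_k H(k) t^k equals h(t)/(1-t)^alpha (alpha = dim S/I(G)
   = independence number) iff, coefficientwise,
   h(t) = (1-t)^alpha * sum_k H(k) t^k.  This is the (unique) numerator. *)
Definition is_hnum (T : finType) (e : rel T) (h : {poly int}) : Prop :=
  forall k : nat,
    (h`_k)%R = (\sum_(i < k.+1)
             ((((1 - 'X) ^+ (indep_number e) : {poly int})`_i)
               * (hilb_fun e (k - i)%N)%:Z)%R)%R.

(* Pseudo-Gorenstein^*: the numerator h_0 + ... + h_s t^s (h_s <> 0) has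
   h_s = 1 and a(G) = s - alpha(G) = 0, i.e. s = alpha(G). *)
Definition pseudo_gorenstein_star (T : finType) (e : rel T) : Prop :=
  exists h : {poly int},
    [/\ is_hnum e h, (size h).-1 = indep_number e & lead_coef h = 1%R].

(* The cycle C_n on vertex set 'I_n (intended for n >= 3). *)
Definition cycle_rel (n : nat) : rel 'I_n :=
  fun i j => (j == i.+1 %% n :> nat) || (i == j.+1 %% n :> nat).

Definition path_rel (n : nat) : rel 'I_n :=
  fun i j => (j == i.+1 :> nat) || (i == j.+1 :> nat).

Definition cone_rel (T : finType) (e : rel T) : rel (option T) :=
  fun x y => match x, y with
             | Some a, Some b => e a b
             | None, Some _ => true
             | Some _, None => true
             | None, None => false
             end.

Arguments cycle_rel n : clear implicits.
Arguments path_rel n : clear implicits.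

(* Since I(G) is a monomial ideal, H(k) counts the degree-k monomials supported
   on independent sets, so the h-polynomial is
   h(t) = sum_A t^|A| (1-t)^(alpha - |A|) over the independent sets A.  It has
   degree at most alpha and its coefficient of t^alpha is (-1)^alpha I(G;-1),
   with I(G;-1) = sum_A (-1)^|A|; hence G is pseudo-Gorenstein* iff
   (-1)^alpha I(G;-1) = 1.  Splitting the independent sets according to a vertex
   v gives I(G;-1) = I(G-v;-1) - I(G-N[v];-1) and
   alpha(G) = max(alpha(G-v), alpha(G-N[v]) + 1).  For the cone this yields
   I(G;-1) - 1 and max(alpha(G), 1); for paths I(P_m;-1) is 6-periodic and
   alpha(P_m) = ceil(m/2); removing a vertex of C_n leaves P_(n-1) and P_(n-3).
   The sign (-1)^alpha is 4-periodic in n, so the criterion only depends on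
   n mod 12. *)

From HB Require Import structures.
From mathcomp Require Import all_boot all_order all_algebra.
From mathcomp Require Import zify.
Set Implicit Arguments. Unset Strict Implicit. Unset Printing Implicit Defensive.
Import Order.TTheory GRing.Theory Num.Theory.
Local Open Scope ring_scope.

Section AgreeUpto.
Variables (R : nzSemiRingType) (N : nat).

Definition agree_upto (p q : {poly R}) := forall i, (i <= N)%N -> p`_i = q`_i.

Lemma agree_uptoM p p' q q' :
  agree_upto p p' -> agree_upto q q' -> agree_upto (p * q) (p' * q').
Proof.
move=> hp hq i le_iN; rewrite !coefM; apply: eq_bigr => j _.
have lt_ji := ltn_ord j.
by rewrite hp ?hq //; lia.
Qed.

Lemma agree_upto_prod (I : finType) (P : pred I) (F G : I -> {poly R}) :
  (forall i, P i -> agree_upto (F i) (G i)) ->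
  agree_upto (\prod_(i | P i) F i) (\prod_(i | P i) G i).
Proof. by move=> h; apply: (big_ind2 agree_upto) => //; apply: agree_uptoM. Qed.

End AgreeUpto.

Definition trunc_geom (k : nat) : {poly int} := \poly_(i < k.+1) ((i != 0)%N%:R).

Lemma agree_upto_trunc_geom m k : (m <= k)%N -> agree_upto m (trunc_geom k) (trunc_geom m).
Proof.
by move=> le_mk i le_im; rewrite !coef_poly ifT ?ifT //; apply: leq_trans le_mk.
Qed.

Lemma agree_upto_1subX_trunc_geom k :
  agree_upto k ((1 - 'X) * trunc_geom k) 'X.
Proof.
move=> i le_ik; rewrite mulrBl mul1r coefB coefXM coefX !coef_poly.
case: i le_ik => [|[|i]] le_ik //=; first by rewrite ifT.
by rewrite !ifT //; lia.
Qed.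

Lemma bigmax_succ (I : finType) (P : pred I) (F : I -> nat) i0 :
  P i0 -> (\max_(i | P i) (F i).+1 = (\max_(i | P i) F i).+1)%N.
Proof.
move=> Pi0; set M := (\max_(i | P i) (F i).+1)%N.
have le_SM i : P i -> (F i < M)%N by apply: (@leq_bigmax_cond _ P (fun j => (F j).+1)).
apply/eqP; rewrite eqn_leq; apply/andP; split.
  by apply/bigmax_leqP => i Pi; rewrite ltnS (@leq_bigmax_cond _ P F).
have : (\max_(i | P i) F i <= M.-1)%N by apply/bigmax_leqP => i /le_SM; lia.
by have := le_SM i0 Pi0; lia.
Qed.

Section OneSubXPower.
Variables (R : idomainType) (m : nat).

Lemma size_1subX_exp : size ((1 - 'X) ^+ m : {poly R}) = m.+1.
Proof.
have size_1subX : size (1 - 'X : {poly R}) = 2%N by rewrite -opprB size_opp size_XsubC.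
have /polySpred-> : (1 - 'X) ^+ m != 0 :> {poly R}.
  by rewrite expf_neq0 // -size_poly_eq0 size_1subX.
by rewrite size_exp size_1subX mul1n.
Qed.

Lemma lead_coef_1subX_exp : lead_coef ((1 - 'X) ^+ m : {poly R}) = (-1) ^+ m.
Proof. by rewrite lead_coef_exp -opprB lead_coefN lead_coefXsubC. Qed.

End OneSubXPower.

Section Independence.
Variables (T : finType) (e : rel T).

Lemma independentP (A : {set T}) :
  reflect (forall x y, x \in A -> y \in A -> ~~ e x y) (independent e A).
Proof.
apply: (iffP forall_inP) => h x; first by move=> y xA; exact: (forall_inP (h x xA) y).
by move=> xA; apply/forall_inP => y; apply: h.
Qed.

Lemma independent_set0 : independent e set0.
Proof. by apply/independentP => x y; rewrite inE. Qed.

Lemma leq_card_indep_number A : independent e A -> (#|A| <= indep_number e)%N.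
Proof. exact: (@leq_bigmax_cond _ (independent e) (fun B => #|B|)). Qed.

Definition closed_nbh v : {set T} := v |: [set x | e v x || e x v].


Lemma independent_setU1 v (B : {set T}) : ~~ e v v -> v \notin B ->
  independent e (v |: B) = [disjoint B & closed_nbh v] && independent e B.
Proof.
move=> nevv vB; apply/independentP/andP => [indepvB | [/pred0P disjB /independentP indepB]].
  split; last by apply/independentP => x y xB yB; apply: indepvB; rewrite setU1r.
  apply/pred0P => x /=; apply/negP => /andP[xB]; rewrite !inE.
  have -> /= : (x == v) = false by apply: contraNF vB => /eqP <-.
  by case/orP; apply/negP; apply: indepvB; rewrite ?setU11 ?setU1r.
have nadj z : z \in B -> ~~ (e v z || e z v).
  by move=> zB; have := disjB z; rewrite /= !inE zB => /norP[_].
move=> x y; rewrite !in_setU1 => /predU1P[-> | xB] /predU1P[-> | yB] //; last exact: indepB.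
  by case/norP: (nadj y yB).
by case/norP: (nadj x xB).
Qed.

End Independence.

Section HPolynomial.
Variables (T : finType) (e : rel T).

Definition support_ffun k (f : {ffun T -> 'I_k.+1}) : {set T} :=
  [set x | (f x != 0 :> nat)].

(* Expanding the product, each factor [t + ... + t^k] contributes the exponent
   of one variable, which is nonzero exactly on [A]. *)
Lemma coef_prod_trunc_geom k (A : {set T}) :
  (\prod_(x in A) trunc_geom k)`_k =
  \sum_(f : {ffun T -> 'I_k.+1})
     (((\sum_x (f x : nat) == k)%N && (support_ffun f == A)) : nat)%:R.
Proof.
have factorE x : (if x \in A then trunc_geom k else 1) =
    \sum_(i : 'I_k.+1) (if (i != 0 :> nat) == (x \in A) then 'X^i else 0).
  rewrite big_ord_recl /=; case: (x \in A) => /=.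
    rewrite /trunc_geom poly_def big_ord_recl /= scale0r !add0r.
    by apply: eq_bigr => i _; rewrite scale1r.
  by rewrite big1 ?addr0 ?expr0 // => i _.
rewrite big_mkcond /= (eq_bigr _ (fun x _ => factorE x)) bigA_distr_bigA coef_sum.
apply: eq_bigr => f _; have [<-|neq_suppA] := eqVneq (support_ffun f) A.
  rewrite (eq_bigr (fun x => 'X^(f x))); last by move=> x _; rewrite inE eqxx.
  by rewrite prodrXr coefXn andbT eq_sym.
have /forallPn[x /negbTE nx] : ~~ [forall x, (f x != 0 :> nat) == (x \in A)].
  apply: contra neq_suppA => /forallP h.
  by apply/eqP/setP => x; rewrite inE; move/eqP: (h x).
by rewrite (bigD1 x) //= nx mul0r coef0 andbF.
Qed.

Lemma independent_support k (f : {ffun T -> 'I_k.+1}) :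
  [forall x, forall y, e x y ==> ((f x : nat) == 0) || ((f y : nat) == 0)]
  = independent e (support_ffun f).
Proof.
apply/forallP/independentP => [h x y | h x].
  rewrite !inE => nx ny; apply/negP => /(implyP (forallP (h x) y)).
  by rewrite (negbTE nx) (negbTE ny).
apply/forallP => y; apply/implyP => exy; move: (h x y); rewrite !inE exy.
by case: eqP => //= _; case: eqP => // _ /(_ isT isT).
Qed.

Lemma hilb_funE k :
  (hilb_fun e k)%:Z = (\sum_(A | independent e A) \prod_(x in A) trunc_geom k)`_k.
Proof.
rewrite coef_sum (eq_bigr _ (fun A _ => coef_prod_trunc_geom k A)) exchange_big /=.
rewrite /hilb_fun -sum1_card (big_mkcond (fun f => f \in _)) /= -natz natr_sum.
apply: eq_bigr => f _; rewrite inE independent_support.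
case: eqP => _ /=; last by rewrite big1.
case: ifP => indep_f.
  rewrite (bigD1 (support_ffun f)) //= eqxx big1 ?addr0 // => A /andP[_].
  by rewrite eq_sym => /negbTE ->.
rewrite big1 // => A indepA; case: eqP => // suppA.
by rewrite suppA indepA in indep_f.
Qed.

Definition hpoly : {poly int} :=
  \sum_(A | independent e A) (1 - 'X) ^+ (indep_number e - #|A|) * 'X^#|A|.

(* Up to degree [N], [trunc_geom N] is [t/(1-t)], so the factor [(1-t)^#|A|]
   turns it into [t^#|A|]. *)
Lemma agree_upto_hpoly N :
  agree_upto N ((1 - 'X) ^+ indep_number e *
                \sum_(A | independent e A) \prod_(x in A) trunc_geom N) hpoly.
Proof.
move=> i le_iN; rewrite mulr_sumr !coef_sum; apply: eq_bigr => A /leq_card_indep_number leA.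
rewrite -{1}(subnK leA) exprD -mulrA; apply: agree_uptoM le_iN => // {}i le_iN.
rewrite -!prodr_const -big_split /=; move: i le_iN.
by apply: agree_upto_prod => x _; apply: agree_upto_1subX_trunc_geom.
Qed.

Lemma is_hnum_hpoly : is_hnum e hpoly.
Proof.
move=> k; rewrite -(agree_upto_hpoly (leqnn k)) coefM; apply: eq_bigr => i _.
rewrite hilb_funE !coef_sum; congr (_ * _); apply: eq_bigr => A _.
by apply: agree_upto_prod (leqnn _) => x _; apply: agree_upto_trunc_geom; apply: leq_subr.
Qed.

Lemma is_hnum_uniq h : is_hnum e h -> h = hpoly.
Proof. by move=> hh; apply/polyP => k; rewrite hh is_hnum_hpoly. Qed.

Lemma coef_hpoly_gt j : (indep_number e < j)%N -> hpoly`_j = 0.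
Proof.
move=> lt_j; rewrite coef_sum big1 // => A /leq_card_indep_number leA.
rewrite coefMXn ifN -?leqNgt; last by lia.
by rewrite nth_default // size_1subX_exp; lia.
Qed.

Lemma coef_hpoly_indep_number :
  hpoly`_(indep_number e) =
  \sum_(A | independent e A) (-1) ^+ (indep_number e - #|A|).
Proof.
rewrite coef_sum; apply: eq_bigr => A /leq_card_indep_number leA.
by rewrite coefMXn ltnNge leA /= -lead_coef_1subX_exp lead_coefE size_1subX_exp.
Qed.

Lemma size_hpoly : hpoly`_(indep_number e) != 0 -> size hpoly = (indep_number e).+1.
Proof.
move=> nz; apply/eqP; rewrite eqn_leq; apply/andP; split.
  by apply/leq_sizeP => j; apply: coef_hpoly_gt.
by rewrite ltnNge; apply: contra nz => /leq_sizeP->.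
Qed.

Lemma pseudo_gorenstein_starE :
  pseudo_gorenstein_star e <-> hpoly`_(indep_number e) = 1.
Proof.
split => [[h [/is_hnum_uniq-> size_h lead_h]] | top1].
  by rewrite -size_h -lead_coefE.
have size_h : size hpoly = (indep_number e).+1 by rewrite size_hpoly ?top1.
by exists hpoly; rewrite lead_coefE size_h; split; [apply: is_hnum_hpoly | |].
Qed.

End HPolynomial.

Section AlternatingCount.
Variables (T : finType) (e : rel T).

Definition indep_alt (U : {set T}) : int :=
  \sum_(A : {set T} | (A \subset U) && independent e A) (-1) ^+ #|A|.

Definition indep_number_in (U : {set T}) : nat :=
  \max_(A : {set T} | (A \subset U) && independent e A) #|A|.

Lemma indep_number_setT : indep_number e = indep_number_in setT.
Proof. by apply: eq_bigl => A; rewrite subsetT. Qed.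

Lemma pseudo_gorenstein_star_alt :
  pseudo_gorenstein_star e <-> (-1) ^+ indep_number_in setT * indep_alt setT = 1.
Proof.
rewrite pseudo_gorenstein_starE coef_hpoly_indep_number -indep_number_setT.
rewrite /indep_alt mulr_sumr.
suff -> : \sum_(A | independent e A) (-1) ^+ (indep_number e - #|A|) =
  \sum_(A : {set T} | (A \subset setT) && independent e A)
     ((-1) ^+ indep_number e * (-1) ^+ #|A|) :> int by [].
apply: eq_big => [A | A /leq_card_indep_number leA]; first by rewrite subsetT.
by rewrite -signr_odd oddB // signr_addb !signr_odd.
Qed.

Lemma big_independent_split (R : Type) (idx : R) (op : Monoid.com_law idx)
    (F : {set T} -> R) (U : {set T}) v :
  v \in U -> ~~ e v v ->
  \big[op/idx]_(A : {set T} | (A \subset U) && independent e A) F A =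
  op (\big[op/idx]_(A : {set T} | (A \subset U :\ v) && independent e A) F A)
     (\big[op/idx]_(B : {set T} | (B \subset U :\: closed_nbh e v) && independent e B) F (v |: B)).
Proof.
move=> vU nevv; rewrite (bigID (fun A : {set T} => v \in A)) /= Monoid.mulmC; congr (op _ _).
  by apply: eq_bigl => A; rewrite subsetD1 andbAC.
rewrite (reindex_onto (fun B => v |: B) (fun A => A :\ v)) /=; last first.
  by move=> A /andP[_ vA]; rewrite setD1K.
apply: eq_bigl => B; rewrite setU11 andbT subsetD.
have [vB | vB] := boolP (v \in B).
  have -> : [disjoint B & closed_nbh e v] = false.
    by apply/negbTE/negP => /disjointFr/(_ vB); rewrite setU11.
  rewrite andbF andFb; case: eqP => [eqB | _]; last by rewrite andbF.
  by move: vB; rewrite -eqB setD11.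
by rewrite (setU1K vB) eqxx andbT independent_setU1 // subUset sub1set vU andbA.
Qed.

Lemma notin_closed_nbh_subset v (U B : {set T}) : B \subset U :\: closed_nbh e v -> v \notin B.
Proof. by move=> /subsetP sB; apply/negP => /sB; rewrite !inE eqxx. Qed.

Lemma indep_alt_split (U : {set T}) v : v \in U -> ~~ e v v ->
  indep_alt U = indep_alt (U :\ v) - indep_alt (U :\: closed_nbh e v).
Proof.
move=> vU nevv; rewrite /indep_alt (big_independent_split _ _ vU nevv) -sumrN.
congr (_ + _); apply: eq_bigr => B /andP[/notin_closed_nbh_subset vB _].
by rewrite cardsU1 vB exprS mulN1r.
Qed.

Lemma indep_number_in_split (U : {set T}) v : v \in U -> ~~ e v v ->
  indep_number_in U = maxn (indep_number_in (U :\ v)) (indep_number_in (U :\: closed_nbh e v)).+1.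
Proof.
move=> vU nevv; rewrite /indep_number_in (big_independent_split _ _ vU nevv).
congr (maxn _ _); rewrite -(@bigmax_succ _ _ _ set0) ?sub0set ?independent_set0 //.
by apply: eq_bigr => B /andP[/notin_closed_nbh_subset vB _]; rewrite cardsU1 vB.
Qed.

Lemma indep_alt_set0 : indep_alt set0 = 1.
Proof.
rewrite /indep_alt (big_pred1 set0) ?cards0 // => A /=.
by rewrite subset0; case: eqP => // ->; apply: independent_set0.
Qed.

Lemma indep_number_in_set0 : indep_number_in set0 = 0%N.
Proof.
rewrite /indep_number_in (big_pred1 set0) ?cards0 // => A /=.
by rewrite subset0; case: eqP => // ->; apply: independent_set0.
Qed.

End AlternatingCount.

Section Restriction.
Variables (T : finType) (e e' : rel T) (U : {set T}).
Hypothesis eq_eU : {in U &, e =2 e'}.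

Lemma eq_independent_in (A : {set T}) : A \subset U -> independent e A = independent e' A.
Proof.
move=> /subsetP sAU; apply/independentP/independentP => indepA x y xA yA.
  by rewrite -eq_eU ?sAU //; apply: indepA.
by rewrite eq_eU ?sAU //; apply: indepA.
Qed.

Lemma eq_indep_alt : indep_alt e U = indep_alt e' U.
Proof. by apply: eq_bigl => A; case: (boolP (A \subset U)) => // /eq_independent_in. Qed.

Lemma eq_indep_number_in : indep_number_in e U = indep_number_in e' U.
Proof. by apply: eq_bigl => A; case: (boolP (A \subset U)) => // /eq_independent_in. Qed.

End Restriction.

Section Embedding.
Variables (T T' : finType) (e : rel T) (e' : rel T') (f : T -> T').
Hypotheses (inj_f : injective f) (e'_f : forall x y, e' (f x) (f y) = e x y).

Lemma independent_imset (A : {set T}) : independent e' (f @: A) = independent e A.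
Proof.
apply/independentP/independentP => indepA => [x y xA yA | _ _ /imsetP[x xA ->] /imsetP[y yA ->]].
  by rewrite -e'_f; apply: indepA; apply: imset_f.
by rewrite e'_f; apply: indepA.
Qed.

Lemma big_independent_imset (R : Type) (idx : R) (op : Monoid.com_law idx)
    (F : {set T'} -> R) :
  \big[op/idx]_(B : {set T'} | (B \subset f @: setT) && independent e' B) F B =
  \big[op/idx]_(A : {set T} | independent e A) F (f @: A).
Proof.
rewrite (reindex_onto (fun A : {set T} => f @: A) (fun B => f @^-1: B)) /=; last first.
  move=> B /andP[/subsetP sB _]; apply/setP => y; apply/imsetP/idP => [[x] | yB].
    by rewrite inE => fxB ->.
  by have /imsetP[x _ eq_y] := sB y yB; exists x; rewrite // inE -eq_y.
apply: eq_bigl => A; rewrite imsetS ?subsetT //= independent_imset.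
suff -> : f @^-1: (f @: A) = A by rewrite eqxx andbT.
by apply/setP => x; rewrite inE mem_imset.
Qed.

Lemma indep_alt_imset : indep_alt e' (f @: setT) = indep_alt e setT.
Proof.
rewrite /indep_alt big_independent_imset.
by apply: eq_big => [A | A _]; rewrite ?subsetT ?card_imset.
Qed.

Lemma indep_number_in_imset : indep_number_in e' (f @: setT) = indep_number_in e setT.
Proof.
rewrite /indep_number_in big_independent_imset.
by apply: eq_big => [A | A _]; rewrite ?subsetT ?card_imset.
Qed.

End Embedding.

Section Cone.
Variables (T : finType) (e : rel T).

Lemma imset_Some_setT : Some @: setT = setT :\ (None : option T).
Proof.
apply/setP => -[x|]; rewrite !inE /=; first exact: imset_f.
by apply/imsetP => -[].
Qed.

Lemma closed_nbh_cone_apex : setT :\: closed_nbh (cone_rel e) None = set0.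
Proof. by apply/setP => -[x|]; rewrite !inE. Qed.

Lemma indep_alt_cone : indep_alt (cone_rel e) setT = indep_alt e setT - 1.
Proof.
rewrite (indep_alt_split (v := None)) ?inE // closed_nbh_cone_apex indep_alt_set0.
by rewrite -imset_Some_setT (indep_alt_imset (@Some_inj _) (fun _ _ => erefl)).
Qed.

Lemma indep_number_in_cone :
  indep_number_in (cone_rel e) setT = maxn (indep_number_in e setT) 1.
Proof.
rewrite (indep_number_in_split (v := None)) ?inE // closed_nbh_cone_apex.
rewrite indep_number_in_set0 -imset_Some_setT.
by rewrite (indep_number_in_imset (@Some_inj _) (fun _ _ => erefl)).
Qed.

End Cone.

Definition segment n a b : {set 'I_n} := [set i : 'I_n | (a <= i < b)%N].

Definition alt_path (m : nat) : int := nth 0 [:: 1; 0; -1; -1; 0; 1] (m %% 6).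

(* For [m = 0] the subtraction truncates, giving [alt_path 1 = 1 - 1]. *)
Lemma alt_pathS m : alt_path m.+1 = alt_path m - alt_path (m - 1).
Proof.
case: m => [|m]; first by [].
rewrite /alt_path subSS subn0 -[m.+2]addn2 -[m.+1]addn1 -(modnDml m 2) -(modnDml m 1).
by case: (m %% 6)%N (ltn_pmod m (isT : (0 < 6)%N)) => [|[|[|[|[|[|]]]]]].
Qed.

Lemma segment_setD1 n a b (lt_bn : (b < n)%N) :
  (a <= b)%N -> segment n a b.+1 :\ Ordinal lt_bn = segment n a b.
Proof. by move=> le_ab; apply/setP => i; rewrite !inE -val_eqE /=; lia. Qed.

Lemma segment_setD_closed_nbh n a b (lt_bn : (b < n)%N) :
  segment n a b.+1 :\: closed_nbh (path_rel n) (Ordinal lt_bn) = segment n a b.-1.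
Proof. by apply/setP => i; rewrite !inE -val_eqE /path_rel /=; lia. Qed.

Lemma indep_path_segment n a m : (a + m <= n)%N ->
  indep_alt (path_rel n) (segment n a (a + m)) = alt_path m /\
  indep_number_in (path_rel n) (segment n a (a + m)) = (m.+1 %/ 2)%N.
Proof.
elim/ltn_ind: m => -[_ _|m IH le_n].
  suff -> : segment n a (a + 0) = set0 by rewrite indep_alt_set0 indep_number_in_set0.
  by apply/setP => i; rewrite !inE; lia.
have lt_n : (a + m < n)%N by lia.
have vU : Ordinal lt_n \in segment n a (a + m).+1 by rewrite inE /=; lia.
have nevv : ~~ path_rel n (Ordinal lt_n) (Ordinal lt_n) by rewrite /path_rel /=; lia.
rewrite addnS (indep_alt_split vU nevv) (indep_number_in_split vU nevv).
rewrite segment_setD1 ?leq_addr // segment_setD_closed_nbh.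
have -> : segment n a (a + m).-1 = segment n a (a + (m - 1)).
  by apply/setP => i; rewrite !inE; lia.
have [-> ->] := IH m ltac:(lia) ltac:(lia).
have [-> ->] := IH (m - 1)%N ltac:(lia) ltac:(lia).
by rewrite alt_pathS; split => //; lia.
Qed.

Lemma segment_setT n : segment n 0 (0 + n) = setT.
Proof. by apply/setP => i; rewrite !inE ltn_ord. Qed.

Lemma cycle_path_segment n a b : (b < n)%N -> {in segment n a b &, cycle_rel n =2 path_rel n}.
Proof.
move=> lt_bn i j; rewrite !inE => /andP[_ lt_ib] /andP[_ lt_jb].
by rewrite /cycle_rel /path_rel !modn_small //; lia.
Qed.

Lemma indep_cycle n : (3 <= n)%N ->
  indep_alt (cycle_rel n) setT = alt_path (n - 1) - alt_path (n - 3) /\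
  indep_number_in (cycle_rel n) setT = (n %/ 2)%N.
Proof.
move=> le3n; have lt_n : (n - 1 < n)%N by lia.
set v := Ordinal lt_n; have vU : v \in setT by rewrite inE.
have last_mod : ((n - 1).+1 %% n = 0)%N by rewrite subn1 prednK ?modnn //; lia.
have nevv : ~~ cycle_rel n v v by rewrite /cycle_rel /= last_mod; lia.
have setD1_v : setT :\ v = segment n 0 (0 + (n - 1)).
  by apply/setP => i; rewrite !inE -val_eqE /=; have := ltn_ord i; lia.
have setD_v : setT :\: closed_nbh (cycle_rel n) v = segment n 1 (1 + (n - 3)).
  apply/setP => i; rewrite !inE -val_eqE /cycle_rel /= last_mod.
  have lt_i := ltn_ord i; have [lt_in | ge_in] := ltnP i.+1 n.
    by rewrite modn_small //; lia.
  by rewrite (_ : i.+1 = n) ?modnn; lia.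
rewrite (indep_alt_split vU nevv) (indep_number_in_split vU nevv) setD1_v setD_v.
have lt_n1 : (0 + (n - 1) < n)%N by lia.
have lt_n3 : (1 + (n - 3) < n)%N by lia.
rewrite (eq_indep_alt (cycle_path_segment lt_n1)) (eq_indep_alt (cycle_path_segment lt_n3)).
rewrite (eq_indep_number_in (cycle_path_segment lt_n1)).
rewrite (eq_indep_number_in (cycle_path_segment lt_n3)).
have [-> ->] := @indep_path_segment n 0 (n - 1) ltac:(lia).
have [-> ->] := @indep_path_segment n 1 (n - 3) ltac:(lia).
by split => //; lia.
Qed.

Lemma indep_path n :
  indep_alt (path_rel n) setT = alt_path n /\
  indep_number_in (path_rel n) setT = (n.+1 %/ 2)%N.
Proof. by rewrite -segment_setT; apply: indep_path_segment. Qed.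

Lemma alt_path_addM6 q m : alt_path (q * 6 + m) = alt_path m.
Proof. by rewrite /alt_path modnMDl. Qed.

Lemma sign_half_addM4 q m : (-1) ^+ ((q * 4 + m) %/ 2) = (-1) ^+ (m %/ 2) :> int.
Proof.
rewrite (_ : q * 4 = q * 2 * 2)%N; last by rewrite -mulnA.
by rewrite divnMDl // exprD exprM sqrr_sign mul1r.
Qed.

Lemma cone_path_criterion n : (1 <= n)%N ->
  ((-1) ^+ maxn (n.+1 %/ 2) 1 * (alt_path n - 1) = 1 :> int) <->
  (n %% 12 = 1 \/ n %% 12 = 10)%N.
Proof.
move=> le1n; rewrite (maxn_idPl _); last by lia.
rewrite (divn_eq n 12); set q := (n %/ 12)%N; set r := (n %% 12)%N.
have lt_r : (r < 12)%N by apply: ltn_pmod.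
rewrite modnMDl -addnS (_ : q * 12 = q * 3 * 4)%N ?sign_half_addM4; last by rewrite -mulnA.
rewrite (_ : q * 3 * 4 = q * 2 * 6)%N ?alt_path_addM6; last by rewrite -!mulnA.
rewrite (modn_small lt_r); clearbody r.
have crit : ((-1) ^+ (r.+1 %/ 2) * (alt_path r - 1) == 1) = (r == 1%N) || (r == 10%N).
  by move: r lt_r; do 12?case=> //.
split => [/eqP | [] ->] //.
by rewrite crit => /orP[] /eqP; [left | right].
Qed.

Lemma cone_cycle_criterion n : (3 <= n)%N ->
  ((-1) ^+ maxn (n %/ 2) 1 * (alt_path (n - 1) - alt_path (n - 3) - 1) = 1 :> int) <->
  (n %% 12 = 0)%N.
Proof.
move=> le3n; rewrite (maxn_idPl _); last by lia.
have [m ->] : exists m, n = (m + 3)%N by exists (n - 3)%N; lia.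
rewrite addnK (_ : m + 3 - 1 = m + 2)%N; last by lia.
rewrite (divn_eq m 12); set q := (m %/ 12)%N; set r := (m %% 12)%N.
have lt_r : (r < 12)%N by apply: ltn_pmod.
rewrite -!addnA modnMDl (_ : q * 12 = q * 3 * 4)%N ?sign_half_addM4; last by rewrite -mulnA.
rewrite (_ : q * 3 * 4 = q * 2 * 6)%N ?alt_path_addM6; last by rewrite -!mulnA.
clearbody r.
have crit : ((-1) ^+ ((r + 3) %/ 2) * (alt_path (r + 2) - alt_path r - 1) == 1) =
            ((r + 3) %% 12 == 0)%N.
  by move: r lt_r; do 12?case=> //.
by split => /eqP; [rewrite crit | rewrite -crit] => /eqP.
Qed.

Local Close Scope ring_scope.

Theorem theorem5p5 :
  (forall n : nat, 3 <= n ->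
     (pseudo_gorenstein_star (cone_rel (cycle_rel n)) <-> n %% 12 = 0))
  /\
  (forall n : nat, 1 <= n ->
     (pseudo_gorenstein_star (cone_rel (path_rel n)) <->
        (n %% 12 = 1 \/ n %% 12 = 10))).
Proof.
split=> n le_n; rewrite pseudo_gorenstein_star_alt indep_number_in_cone indep_alt_cone.
  by have [-> ->] := indep_cycle le_n; apply: cone_cycle_criterion.
by have [-> ->] := indep_path n; apply: cone_path_criterion.
Qed.
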